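(* Let $n\ge 1$, let $e,f$ be scalars, and let $A,B,C,D,M$ be $n\times n$ matrices. Then $d_{C,D}(M)-d_{A,B}(M)\le 1$ in each of the following cases: (1) $A=C$, $B=Z_e$, $D=Z_f$; (2) $A=C$, $B=Z_e^T$, $D=Z_f^T$; (3) $B=D$, $A=Z_e$, $C=Z_f$; (4) $B=D$, $A=Z_e^T$, $C=Z_f^T$.
   Context: For a scalar $f$, $Z_f$ denotes the $n\times n$ matrix of $f$-circular shift: $Z_f=\begin{pmatrix}\mathbf 0^T & f\\ I_{n-1} & \mathbf 0\end{pmatrix}$ (ones on the first subdiagonal, $f$ in the upper right corner, zeros elsewhere). For matrices $A,B,M$ of compatible sizes, the (Sylvester) displacement rank of $M$ with respect to the operator pair $(A,B)$ is $d_{A,B}(M)=\operatorname{rank}(AM-MB)$. *)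

From mathcomp Require Import all_boot all_order all_algebra.
Set Implicit Arguments. Unset Strict Implicit. Unset Printing Implicit Defensive.
Import GRing.Theory.
Local Open Scope ring_scope.

Definition Zshift (F : fieldType) (n : nat) (f : F) : 'M[F]_n :=
  \matrix_(i < n, j < n)
    ((if i == j.+1 :> nat then 1 else 0) +
     (if (i == 0%N :> nat) && (j == n.-1 :> nat) then f else 0)).

Definition disp_rank (F : fieldType) (n : nat) (A B M : 'M[F]_n) : nat :=
  \rank (A *m M - M *m B).

From mathcomp Require Import all_boot all_order all_algebra.
Local Open Scope ring_scope.
Import GRing.Theory.

(* Changing one operator of the pair by a matrix E perturbs A M - M B by
   M E or E M, whose rank is at most rank E; and Z_e - Z_f has rank at most
   one, being supported on the upper right corner. *)

Lemma disp_rank_changer {F : fieldType} {n : nat} (A B D M : 'M[F]_n) :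
  (disp_rank A D M <= disp_rank A B M + \rank (B - D)%R)%N.
Proof.
rewrite /disp_rank.
have -> : A *m M - M *m D = (A *m M - M *m B) + M *m (B - D).
  by rewrite mulmxBr addrA subrK.
by apply: leq_trans (mxrank_add _ _) _; rewrite leq_add2l mxrankM_maxr.
Qed.

Lemma disp_rank_changel {F : fieldType} {n : nat} (A B C M : 'M[F]_n) :
  (disp_rank C B M <= disp_rank A B M + \rank (A - C)%R)%N.
Proof.
rewrite /disp_rank.
have -> : C *m M - M *m B = (A *m M - M *m B) - (A - C) *m M.
  by rewrite mulmxBl opprB [RHS]addrC addrA subrK.
by apply: leq_trans (mxrank_add _ _) _; rewrite leq_add2l mxrank_opp mxrankM_maxl.
Qed.

Lemma Zshift_sub (F : fieldType) (n : nat) (e f : F) :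
  Zshift n.+1 e - Zshift n.+1 f = (e - f) *: delta_mx 0 ord_max.
Proof.
apply/matrixP => i j; rewrite !mxE.
have -> : (i == 0) && (j == ord_max) = (i == 0%N :> nat) && (j == n :> nat) by [].
case: (_ && _) => /=; last by rewrite mulr0 !addr0 subrr.
by rewrite mulr1 opprD addrACA subrr add0r.
Qed.

Lemma rank_Zshift_sub (F : fieldType) (n : nat) (e f : F) :
  (\rank (Zshift n.+1 e - Zshift n.+1 f)%R <= 1)%N.
Proof.
rewrite Zshift_sub -mul_scalar_mx.
by apply: leq_trans (mxrankM_maxr _ _) _; rewrite mxrank_delta.
Qed.

Lemma rank_trZshift_sub (F : fieldType) (n : nat) (e f : F) :
  (\rank ((Zshift n.+1 e)^T - (Zshift n.+1 f)^T)%R <= 1)%N.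
Proof. by rewrite -linearB /= mxrank_tr rank_Zshift_sub. Qed.

Theorem theorem3p2 (F : fieldType) (n : nat) (e f : F)
    (A B C D M : 'M[F]_n.+1) :
  ((A = C /\ B = Zshift n.+1 e /\ D = Zshift n.+1 f) \/
   (A = C /\ B = (Zshift n.+1 e)^T /\ D = (Zshift n.+1 f)^T) \/
   (B = D /\ A = Zshift n.+1 e /\ C = Zshift n.+1 f) \/
   (B = D /\ A = (Zshift n.+1 e)^T /\ C = (Zshift n.+1 f)^T)) ->
  (disp_rank C D M <= disp_rank A B M + 1)%N.
Proof.
have right_bound X Y : (\rank (X - Y)%R <= 1)%N ->
    (disp_rank A Y M <= disp_rank A X M + 1)%N.
  by move=> rk1; apply: leq_trans (disp_rank_changer A X Y M) _; rewrite leq_add2l.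
have left_bound X Y : (\rank (X - Y)%R <= 1)%N ->
    (disp_rank Y B M <= disp_rank X B M + 1)%N.
  by move=> rk1; apply: leq_trans (disp_rank_changel X B Y M) _; rewrite leq_add2l.
case=> [[<- [-> ->]]|[[<- [-> ->]]|[[<- [-> ->]]|[<- [-> ->]]]]].
- exact/right_bound/rank_Zshift_sub.
- exact/right_bound/rank_trZshift_sub.
- exact/left_bound/rank_Zshift_sub.
- exact/left_bound/rank_trZshift_sub.
Qed.
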